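(* Let $\mathsf K\in\{\mathsf O,\mathsf{Sp}\}$ and $z\in I_n$. Then $MX^{\mathsf K}_z=\{A\in\mathsf{Mat}^{\mathsf K}_n:\operatorname{rank}(A_{[i][j]})\le\operatorname{rank}(z_{[i][j]})\text{ for all }(i,j)\in\operatorname{Ess}(D^{\mathsf O}(z))\}.$ Moreover, if $n$ is even and $z\in I^{\mathsf{FPF}}_n$ then $MX^{\mathsf{Sp}}_z=\{A\in\mathsf{Mat}^{\mathsf{Sp}}_n:\operatorname{rank}(A_{[i][j]})\le\operatorname{rank}(z_{[i][j]})\text{ for all }(i,j)\in\operatorname{Ess}(D^{\mathsf{Sp}}(z))\}.$
   Context: $I_n$ (resp. $I^{\mathsf{FPF}}_n$) is the set of involutions (resp. fixed-point-free involutions) in $S_n$; $z$ is identified with its permutation matrix with $1$'s at $(i,z(i))$; $A_{[i][j]}$ is the upper-left $i\times j$ submatrix. $\mathsf{Mat}^{\mathsf O}_n$ (resp. $\mathsf{Mat}^{\mathsf{Sp}}_n$) is the space of complex symmetric (resp. skew-symmetric) $n\times n$ matrices, and $MX^{\mathsf K}_z=\{A\in\mathsf{Mat}^{\mathsf K}_n:\operatorname{rank}(A_{[i][j]})\le\operatorname{rank}(z_{[i][j]})\ \forall i,j\in[n]\}$. The orthogonal Rothe diagram is $D^{\mathsf O}(z)=\{(i,z(j)):(i,j)\in[n]^2,\ z(i)>z(j)\le i<j\}$ and the symplectic Rothe diagram is $D^{\mathsf{Sp}}(z)=\{(i,z(j)):(i,j)\in[n]^2,\ z(i)>z(j)<i<j\}$.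 For $D\subseteq\mathbb{P}\times\mathbb{P}$, $\operatorname{Ess}(D)=\{(i,j)\in D:(i,j+1)\notin D,\ (i+1,j)\notin D\}$. *)

From HB Require Import structures.
From mathcomp Require Import all_boot all_order all_algebra all_fingroup.
From mathcomp Require Import complex.
From mathcomp Require Import Rstruct.
From Stdlib Require Reals.
Set Implicit Arguments. Unset Strict Implicit. Unset Printing Implicit Defensive.
Import Order.TTheory GRing.Theory Num.Theory.
Local Open Scope ring_scope.

Notation CC := (complex Rdefinitions.R).

(* Index convention: the paper's index k in [n] = {1..n} is the ordinal
   k-1 : 'I_n; all comparisons are order-preserving, so we can use ordinals. *)

Definition is_involution n (z : 'S_n) : bool := [forall i, z (z i) == i].
Definition is_fpf_involution n (z : 'S_n) : bool :=
  is_involution z && [forall i, z i != i].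

Definition zmat n (z : 'S_n) : 'M[CC]_n := perm_mx z.

(* Upper-left (i+1) x (j+1) submatrix A_[i+1][j+1], for i j : 'I_n. *)
Definition ulsub (F : Type) n (A : 'M[F]_n) (i j : 'I_n) : 'M[F]_(i.+1, j.+1) :=
  \matrix_(a < i.+1, b < j.+1) A (widen_ord (ltn_ord i) a) (widen_ord (ltn_ord j) b).

Inductive kind := KO | KSp.

Definition matK (K : kind) n (A : 'M[CC]_n) : bool :=
  match K with
  | KO => A^T == A
  | KSp => A^T == - A
  end.

Definition MX (K : kind) n (z : 'S_n) (A : 'M[CC]_n) : Prop :=
  matK K A /\
  forall i j : 'I_n, (\rank (ulsub A i j) <= \rank (ulsub (zmat z) i j))%N.

Definition DO n (z : 'S_n) (p : nat * nat) : bool :=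
  [exists i : 'I_n, exists j : 'I_n,
     [&& p == (val i, val (z j)), (z j < z i)%N, (z j <= i)%N & (i < j)%N]].

Definition DSp n (z : 'S_n) (p : nat * nat) : bool :=
  [exists i : 'I_n, exists j : 'I_n,
     [&& p == (val i, val (z j)), (z j < z i)%N, (z j < i)%N & (i < j)%N]].

Definition Ess (D : nat * nat -> bool) (p : nat * nat) : bool :=
  [&& D p, ~~ D (p.1, p.2.+1) & ~~ D (p.1.+1, p.2)].

From HB Require Import structures.
From mathcomp Require Import all_boot all_order all_algebra all_fingroup.
From mathcomp Require Import complex Rstruct.
From mathcomp Require Import zify.
Set Implicit Arguments. Unset Strict Implicit. Unset Printing Implicit Defensive.
Import Order.TTheory GRing.Theory Num.Theory.
Local Open Scope ring_scope.

(* Let r(p, q) be the rank of the upper-left p x q corner of A and c(p, q) the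
   number of k < p with z k < q, which is the same rank for the permutation
   matrix of z.  Both are symmetric in (p, q) when A is symmetric or
   skew-symmetric and z is an involution; when p grows by one, r grows by at
   most one while c grows by one exactly when z p < q.  Hence r <= c can be
   propagated from smaller corners at every cell except those (i, j) with
   j < z i and i < z j, i.e. the Rothe diagram of z.  There, the bound spreads
   from the essential set to the whole of D^O or D^Sp by moving right or down
   (c is constant along these moves), and to the transposed half by symmetry.
   The diagonal cells missing from D^Sp are handled by parity: the corners of a
   skew-symmetric matrix have even rank, and c(p, p) is even for a
   fixed-point-free involution. *)

Lemma leq_even_succ a b : ~~ odd a -> ~~ odd b -> (a <= b.+1)%N -> (a <= b)%N.
Proof.
move=> a_even b_even; rewrite leq_eqVlt ltnS => /orP [/eqP a_eq|//].
by move: a_even; rewrite a_eq /= b_even.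
Qed.

Lemma mxrankM_maxm (F : fieldType) m n p k (A : 'M[F]_(m, n)) (B : 'M_(n, p))
    (C : 'M_(p, k)) :
  (\rank (A *m B *m C) <= \rank B)%N.
Proof. exact: leq_trans (mxrankM_maxl _ _) (mxrankM_maxr _ _). Qed.

Lemma mxrank_diag (F : fieldType) n (d : 'rV[F]_n) :
  \rank (diag_mx d) = (\sum_(k < n) (d ord0 k != 0%R))%N.
Proof.
elim: n d => [|n IHn] d; first by rewrite big_ord0 flatmx0 mxrank0.
rewrite big_ord_recl; move: d; rewrite -[n.+1]/(1 + n)%N => d.
rewrite -[d]hsubmxK diag_mx_row rank_diag_block_mx IHn.
congr (_ + _)%N; last first.
  apply: eq_bigr => k _.
  by rewrite (_ : lift ord0 k = rshift 1 k) ?row_mxEr //; apply: val_inj.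
rewrite (_ : ord0 = lshift n (ord0 : 'I_1)) ?row_mxEl //; last exact: val_inj.
move: (lsubmx d) => l.
have [l0|l_neq0] := eqVneq (l 0 0) 0.
  suff -> : diag_mx l = 0 by rewrite mxrank0.
  by apply/matrixP => i j; rewrite !ord1 !mxE l0 mul0rn.
apply/eqP; rewrite eqn_leq rank_leq_row lt0n mxrank_eq0.
by apply: contra l_neq0 => /eqP/matrixP/(_ 0 0); rewrite !mxE mulr1n => ->.
Qed.

Lemma mxrank_adds_notsub (F : fieldType) m n (v : 'rV[F]_n) (B : 'M_(m, n)) :
  ~~ (v <= B)%MS -> \rank (v + B)%MS = (\rank B).+1.
Proof.
move=> vNB; apply/eqP; rewrite eqn_leq; apply/andP; split.
  apply: leq_trans (mxrank_adds_leqif _ _).1 _.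
  by have := rank_leq_row v; lia.
by apply: rank_ltmx; rewrite ltmxE addsmxSr /= addsmx_sub negb_and vNB.
Qed.

Section SkewRank.

Variable F : fieldType.
Hypothesis two_neq0 : 2%:R != 0 :> F.

Lemma skew_mx11_eq0 (b : 'M[F]_1) : b^T = - b -> b = 0.
Proof.
move=> /matrixP/(_ 0 0); rewrite !mxE => bN.
apply/matrixP => i j; rewrite !ord1 mxE; apply/eqP.
have : b 0 0 *+ 2 == 0 by rewrite mulr2n {1}bN addNr.
by rewrite -mulr_natr mulf_eq0 (negPf two_neq0) orbF.
Qed.

Section Border.

Variables (k : nat) (u : 'rV[F]_k) (N : 'M[F]_k).
Hypothesis N_skew : N^T = - N.

Lemma mxrank_skew_border_sub : (u <= N)%MS ->
  \rank (block_mx 0 u (- u^T) N) = \rank N.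
Proof.
case/submxP=> x ->.
have xNx0 : x *m N *m x^T = 0.
  by apply: skew_mx11_eq0; rewrite !trmx_mul trmxK N_skew mulNmx mulmxN mulmxA.
have -> : block_mx 0 (x *m N) (- (x *m N)^T) N = col_mx x 1%:M *m N *m row_mx x^T 1%:M.
  rewrite mul_col_mx mul1mx mul_col_row xNx0 !mulmx1.
  by rewrite trmx_mul N_skew mulNmx opprK.
apply/eqP; rewrite eqn_leq mxrankM_maxm /=.
set M := _ *m row_mx _ _.
have <- : row_mx 0 1%:M *m M *m col_mx 0 1%:M = N.
  rewrite /M !mulmxA mul_row_col mul0mx add0r !mul1mx.
  by rewrite -mulmxA mul_row_col mulmx0 add0r !mulmx1.
exact: mxrankM_maxm.
Qed.

Lemma mxrank_skew_border_notsub : ~~ (u <= N)%MS ->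
  \rank (block_mx 0 u (- u^T) N) = (\rank N).+2.
Proof.
move=> uNN.
have rk_low : \rank (row_mx (- u^T) N) = (\rank N).+1.
  rewrite -mxrank_tr tr_row_mx linearN /= trmxK N_skew -opp_col_mx (eqmx_opp _).1.
  by rewrite -(addsmxE u N).1 mxrank_adds_notsub.
rewrite block_mxEv -(addsmxE _ _).1 mxrank_adds_notsub ?rk_low //.
apply/negP => /submxP [y]; rewrite mul_mx_row => /eq_row_mx [_ uyN].
by move: uNN; rewrite uyN submxMl.
Qed.

End Border.

Lemma skew_rank_even k (M : 'M[F]_k) : M^T = - M -> ~~ odd (\rank M).
Proof.
elim: k M => [|k IHk] M; first by rewrite [M]flatmx0 mxrank0.
move: M; rewrite -[k.+1]/(1 + k)%N => M.
rewrite -[M]submxK tr_block_mx opp_block_mx => /eq_block_mx [ul_skew _ ur_tr dr_skew].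
have -> : dlsubmx M = - (ursubmx M)^T by rewrite ur_tr opprK.
rewrite (skew_mx11_eq0 ul_skew).
have [ur_sub|ur_notsub] := boolP (ursubmx M <= drsubmx M)%MS.
  by rewrite mxrank_skew_border_sub // IHk.
by rewrite mxrank_skew_border_notsub //= negbK IHk.
Qed.

End SkewRank.

Section CornerCard.

Variables (n : nat) (s : 'S_n).
Local Open Scope nat_scope.

Definition corner_card (p q : nat) : nat :=
  \sum_(k < n) ((k < p) && (s k < q)).

Lemma is_involutionP : reflect (involutive s) (is_involution s).
Proof. by apply: (iffP forallP) => sK k; apply/eqP. Qed.

Lemma corner_cardS (i : 'I_n) q :
  corner_card i.+1 q = corner_card i q + (s i < q).
Proof.
rewrite /corner_card (bigD1 i) // [X in _ = X + _](bigD1 i) //=.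
rewrite ltnSn ltnn add0n addnC; congr (_ + _).
by apply: eq_bigr => k k_neq_i; rewrite ltnS leq_eqVlt val_eqE (negbTE k_neq_i).
Qed.

Lemma corner_card_sym p q : is_involution s -> corner_card p q = corner_card q p.
Proof.
move/is_involutionP => sK; rewrite /corner_card (reindex_inj (@perm_inj _ s)) /=.
by apply: eq_bigr => k _; rewrite sK andbC.
Qed.

Lemma corner_card_even p : is_fpf_involution s -> ~~ odd (corner_card p p).
Proof.
case/andP => /is_involutionP sK /forallP s_fpf.
rewrite /corner_card (bigID (fun k : 'I_n => k < s k)) /=.
suff -> : \sum_(k < n | ~~ (k < s k)) ((k < p) && (s k < p)) =
          \sum_(k < n | k < s k) ((k < p) && (s k < p)).
  by rewrite addnn odd_double.
rewrite (reindex_inj (@perm_inj _ s)) /=; apply: eq_big => k; last by rewrite sK andbC.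
by rewrite sK -leqNgt leq_eqVlt val_eqE eq_sym (negbTE (s_fpf k)).
Qed.

End CornerCard.

Section CornerRank.

Variables (F : fieldType) (n : nat).
Implicit Types (A : 'M[F]_n) (p q : nat).

Definition corner_rank A p q := \rank ((pid_mx p : 'M[F]_n) *m A *m (pid_mx q : 'M_n)).

Lemma corner_rank0 A q : corner_rank A 0 q = 0%N.
Proof. by rewrite /corner_rank pid_mx_0 !mul0mx mxrank0. Qed.

Lemma corner_rank_tr A p q : corner_rank A^T p q = corner_rank A q p.
Proof. by rewrite /corner_rank -mxrank_tr !trmx_mul !tr_pid_mx trmxK mulmxA. Qed.

Lemma corner_rankN A p q : corner_rank (- A) p q = corner_rank A p q.
Proof. by rewrite /corner_rank mulmxN mulNmx (eqmx_opp _).1. Qed.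

Lemma corner_rank_leS A p q : (corner_rank A p q <= corner_rank A p.+1 q)%N.
Proof.
rewrite /corner_rank.
have -> : (pid_mx p : 'M[F]_n) = pid_mx p *m (pid_mx p.+1 : 'M_n).
  by rewrite mul_pid_mx [minn p _](minn_idPl (leqnSn p)) pid_mx_minv.
by rewrite -!mulmxA mxrankM_maxr.
Qed.

Lemma pid_mxS (i : 'I_n) : pid_mx i.+1 = pid_mx i + delta_mx i i :> 'M[F]_n.
Proof.
apply/matrixP => a b; rewrite !mxE -!val_eqE /= ltnS leq_eqVlt.
by have [->|] := eqVneq (val a) i; rewrite ?ltnn ?andbF ?add0r ?andbT ?addr0 // eq_sym.
Qed.

Lemma corner_rankS_le A p q : (corner_rank A p.+1 q <= (corner_rank A p q).+1)%N.
Proof.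
rewrite /corner_rank; have [lt_pn|le_np] := ltnP p n.
  rewrite (pid_mxS (Ordinal lt_pn)) !mulmxDl.
  apply: leq_trans (mxrank_add _ _) _; rewrite -addn1 leq_add2l.
  by rewrite -mulmxA (leq_trans (mxrankM_maxl _ _)) ?mxrank_delta.
have pid1 r : (n <= r)%N -> (pid_mx r : 'M[F]_n) = 1%:M.
  by move=> le_nr; rewrite -pid_mx_minv (minn_idPl le_nr) pid_mx_1.
by rewrite (pid1 p) ?(pid1 p.+1) ?leqW.
Qed.

Lemma mxrank_ulsub A (i j : 'I_n) : \rank (ulsub A i j) = corner_rank A i.+1 j.+1.
Proof.
have colE : (pid_mx j.+1 : 'M[F]_(n, j.+1)) = colsub (widen_ord (ltn_ord j)) 1%:M.
  apply/matrixP => a b; rewrite !mxE -val_eqE /=.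
  by case: eqP => //= ->; rewrite ltn_ord.
set X := (pid_mx i.+1 : 'M_(i.+1, n)) *m A *m (pid_mx j.+1 : 'M_(n, j.+1)).
have -> : ulsub A i j = X.
  rewrite /X colE (pid_mxErow _ (ltn_ord i)) mul_rowsub_mx mul1mx mulmx_colsub mulmx1.
  by apply/matrixP => a b; rewrite !mxE.
rewrite /corner_rank; set Y := _ *m A *m _.
apply/eqP; rewrite eqn_leq; apply/andP; split.
  have -> : X = pid_mx i.+1 *m Y *m pid_mx j.+1.
    by rewrite /Y !mulmxA pid_mx_id ?ltn_ord // -!mulmxA pid_mx_id ?ltn_ord // mulmxA.
  exact: mxrankM_maxm.
have -> : Y = pid_mx i.+1 *m X *m pid_mx j.+1.
  by rewrite /X !mulmxA pid_mx_id // -!mulmxA pid_mx_id // mulmxA.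
exact: mxrankM_maxm.
Qed.

Lemma corner_rank_perm_mx (s : 'S_n) p q :
  corner_rank (perm_mx s) p q = corner_card s p q.
Proof.
have pidE r : pid_mx r = diag_mx (\row_k ((k < r)%N)%:R) :> 'M[F]_n.
  by apply/matrixP => a b; rewrite !mxE -val_eqE andbC; case: (a < r)%N; case: eqP.
rewrite /corner_rank.
pose d : 'rV[F]_n := \row_k (((k < p) && (s k < q))%N)%:R.
have -> : (pid_mx p : 'M_n) *m perm_mx s *m pid_mx q = diag_mx d *m perm_mx s.
  rewrite !pidE mul_diag_mx mul_mx_diag mul_diag_mx.
  apply/matrixP => a b; rewrite !mxE; have [<-|] := eqVneq (s a) b.
    by case: (a < p)%N; case: (s a < q)%N; rewrite ?mulr1 ?mulr0 ?mul0r.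
  by rewrite !mulr0 mul0r.
rewrite mxrankMfree ?row_free_unit ?unitmx_perm // mxrank_diag.
by apply: eq_bigr => k _; rewrite mxE; case: (_ && _); rewrite ?oner_eq0 ?eqxx.
Qed.

Lemma corner_rank_skew_even A p : 2%:R != 0 :> F -> A^T = - A ->
  ~~ odd (corner_rank A p p).
Proof.
move=> two_neq0 A_skew; apply: skew_rank_even => //.
by rewrite !trmx_mul !tr_pid_mx A_skew mulNmx mulmxN mulmxA.
Qed.

End CornerRank.

(* By conversion, DO z is rothe_part z leq and DSp z is
   rothe_part z ltn. *)
Definition rothe_part n (z : 'S_n) (P : rel nat) (c : nat * nat) : bool :=
  [exists i : 'I_n, exists j : 'I_n,
     [&& c == (val i, val (z j)), (z j < z i)%N, P (z j) i & (i < j)%N]].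

Section RothePart.

Variables (n : nat) (z : 'S_n) (P : rel nat).
Local Open Scope nat_scope.

Lemma rothe_part_ord a b : rothe_part z P (a, b) -> (a < n) && (b < n).
Proof.
by case/existsP => i /existsP [j /and4P [/eqP [-> ->] _ _ _]]; rewrite !ltn_ord.
Qed.

Lemma rothe_partE (i j : 'I_n) : is_involution z ->
  rothe_part z P (val i, val j) = [&& j < z i, i < z j & P j i].
Proof.
move/is_involutionP => zK; apply/existsP/and3P => [[i' /existsP [j']]|[ji ij Pji]].
  case/and4P => /eqP [/val_inj <- /val_inj ->]; rewrite zK => -> -> ->.
  by split.
by exists i; apply/existsP; exists (z j); rewrite zK eqxx ji Pji ij.
Qed.

End RothePart.

Section CornerBound.

Local Open Scope nat_scope.

Variables (n : nat) (z : 'S_n) (r : nat -> nat -> nat).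
Hypothesis z_invol : is_involution z.
Hypothesis r0 : forall q, r 0 q = 0.
Hypothesis r_sym : forall p q, r p q = r q p.
Hypothesis r_leS : forall p q, r p q <= r p.+1 q.
Hypothesis r_Sle : forall p q, r p.+1 q <= (r p q).+1.

Local Notation c := (corner_card z).

Let c_sym p q : c p q = c q p.
Proof. exact: corner_card_sym. Qed.

Let corner_cardSr p (j : 'I_n) : c p j.+1 = c p j + (z j < p).
Proof. by rewrite c_sym corner_cardS c_sym. Qed.

Let r_leSr p q : r p q <= r p q.+1.
Proof. by rewrite r_sym [r p _]r_sym. Qed.

Let r_Sler p q : r p q.+1 <= (r p q).+1.
Proof. by rewrite r_sym [r p _]r_sym. Qed.

Lemma rothe_part_bound P :
    (forall i j : 'I_n, Ess (rothe_part z P) (val i, val j) ->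
       r i.+1 j.+1 <= c i.+1 j.+1) ->
  forall i j : 'I_n, rothe_part z P (val i, val j) -> r i.+1 j.+1 <= c i.+1 j.+1.
Proof.
move=> ess_bound i j; have [k] := ubnP (n - i + (n - j)).
elim: k => // k IHk in i j *; rewrite ltnS => le_ij_k D_ij.
have [/ess_bound//|] := boolP (Ess (rothe_part z P) (val i, val j)).
rewrite /Ess D_ij /= negb_and !negbK => /orP [D_right|D_down].
  have /andP [_ lt_j1n] := rothe_part_ord D_right.
  pose j1 := Ordinal lt_j1n.
  have D_ij1 : rothe_part z P (val i, val j1) := D_right.
  have := D_ij1; rewrite rothe_partE // => /and3P [_ i_lt_zj1 _].
  have -> : c i.+1 j.+1 = c i.+1 j1.+1.
    by rewrite [RHS]corner_cardSr ltnS leqNgt i_lt_zj1 addn0.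
  apply: leq_trans (IHk i j1 _ D_ij1) => //.
  by rewrite /=; lia.
have /andP [lt_i1n _] := rothe_part_ord D_down.
pose i1 := Ordinal lt_i1n.
have D_i1j : rothe_part z P (val i1, val j) := D_down.
have := D_i1j; rewrite rothe_partE // => /and3P [j_lt_zi1 _ _].
have -> : c i.+1 j.+1 = c i1.+1 j.+1.
  by rewrite [RHS]corner_cardS ltnS leqNgt j_lt_zi1 addn0.
apply: leq_trans (IHk i1 j _ D_i1j) => //.
by rewrite /=; lia.
Qed.

Lemma corner_bound (P : rel nat) :
    (forall a b : nat, a != b -> P a b || P b a) ->
    (forall i : 'I_n, ~~ P i i -> ~~ odd (r i.+1 i.+1) && ~~ odd (c i.+1 i.+1)) ->
    (forall i j : 'I_n, Ess (rothe_part z P) (val i, val j) ->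
       r i.+1 j.+1 <= c i.+1 j.+1) ->
  forall i j : 'I_n, r i.+1 j.+1 <= c i.+1 j.+1.
Proof.
move=> P_total P_diag ess_bound.
have rothe_bound (i j : 'I_n) : j < z i -> i < z j -> P j i -> r i.+1 j.+1 <= c i.+1 j.+1.
  by move=> ji ij Pji; apply: (rothe_part_bound ess_bound); rewrite rothe_partE // ji ij.
suff bound p q : p <= n -> q <= n -> r p q <= c p q by move=> i j; apply: bound.
have [k] := ubnP (p + q); elim: k => // k IHk in p q *; rewrite ltnS => le_pq_k.
case: p q le_pq_k => [|p] [|q] le_pq_k lt_pn lt_qn; rewrite ?r0 // r_sym ?r0 // r_sym.
pose i := Ordinal lt_pn; pose j := Ordinal lt_qn.
have [zi_le_j|j_lt_zi] := leqP (z i) j.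
  rewrite (corner_cardS _ i) ltnS zi_le_j addn1.
  by apply: leq_trans (r_Sle _ _) _; rewrite ltnS IHk //; lia.
have [zj_le_i|i_lt_zj] := leqP (z j) i.
  rewrite (corner_cardSr _ j) ltnS zj_le_i addn1.
  by apply: leq_trans (r_Sler _ _) _; rewrite ltnS IHk //; lia.
have [eq_pq|ne_pq] := eqVneq p q.
  subst q; have [Ppp|nPpp] := boolP (P p p); first exact: (rothe_bound i j).
  have /andP [r_even c_even] := P_diag i nPpp.
  (* Propagation only gives r <= c + 1 here; parity closes the gap. *)
  apply: leq_even_succ r_even c_even _.
  have i_lt_zi : i < z i := j_lt_zi.
  rewrite (corner_cardS _ i) ltnS (leqNgt (z i)) i_lt_zi addn0.
  by apply: leq_trans (r_Sle _ _) _; rewrite ltnS IHk // /i /=; lia.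
have /orP [Ppq|Pqp] := P_total _ _ ne_pq; last exact: (rothe_bound i j).
by rewrite r_sym c_sym; apply: (rothe_bound j i).
Qed.

End CornerBound.

Lemma corner_rank_matK K n (A : 'M[CC]_n) p q :
  matK K A -> corner_rank A p q = corner_rank A q p.
Proof. by case: K => /eqP A_K; rewrite -corner_rank_tr A_K ?corner_rankN. Qed.

Lemma MX_of_ess K n (z : 'S_n) (A : 'M[CC]_n) (P : rel nat) :
    is_involution z -> matK K A ->
    (forall a b : nat, a != b -> P a b || P b a) ->
    (forall i : 'I_n, ~~ P i i ->
       ~~ odd (corner_rank A i.+1 i.+1) && ~~ odd (corner_card z i.+1 i.+1)) ->
    (forall i j : 'I_n, Ess (rothe_part z P) (val i, val j) ->
       (\rank (ulsub A i j) <= \rank (ulsub (zmat z) i j))%N) ->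
  MX K z A.
Proof.
move=> z_invol A_K P_total P_diag ess_bound; split=> // i j.
rewrite !mxrank_ulsub corner_rank_perm_mx.
apply: (corner_bound (r := corner_rank A) z_invol) P_total P_diag _ i j.
- exact: corner_rank0.
- by move=> p q; apply: corner_rank_matK A_K.
- exact: corner_rank_leS.
- exact: corner_rankS_le.
by move=> i' j' /ess_bound; rewrite !mxrank_ulsub corner_rank_perm_mx.
Qed.

Theorem proposition2p16 :
  (forall (K : kind) (n : nat) (z : 'S_n), is_involution z ->
     forall A : 'M[CC]_n,
       MX K z A <->
       (matK K A /\
        forall i j : 'I_n, Ess (DO z) (val i, val j) ->
          (\rank (ulsub A i j) <= \rank (ulsub (zmat z) i j))%N))
  /\
  (forall (n : nat) (z : 'S_n), ~~ odd n -> is_fpf_involution z ->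
     forall A : 'M[CC]_n,
       MX KSp z A <->
       (matK KSp A /\
        forall i j : 'I_n, Ess (DSp z) (val i, val j) ->
          (\rank (ulsub A i j) <= \rank (ulsub (zmat z) i j))%N)).
Proof.
(* The evenness of n is implied by z being fixed-point-free. *)
split=> [K n z z_invol A | n z _ z_fpf A].
  split=> [[A_K A_le] | [A_K A_ess]]; first by split=> // i j _; apply: A_le.
  apply: (MX_of_ess (P := leq)) => //; first by move=> a b _; apply: leq_total.
  by move=> i; rewrite leqnn.
have z_invol : is_involution z by case/andP: z_fpf.
split=> [[A_K A_le] | [A_K A_ess]]; first by split=> // i j _; apply: A_le.
apply: (MX_of_ess (P := ltn)) => //; first by move=> a b; rewrite neq_ltn.
move=> i _; rewrite corner_card_even // andbT.
by apply: corner_rank_skew_even; rewrite ?pnatr_eq0 // -(eqP A_K).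
Qed.
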